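(* Consider the Variance-shifting Procedure described in the context, with the variance metric of model (I), i.e. $\mathcal{F}(\bar f)=\mathcal{E}$ for every $\bar f$, so $\Delta(\bar f,s^2)=\sum_{ij\in\mathcal{E}}\Delta_{ij}(s^2_{ij})$ with each $\Delta_{ij}$ convex and nondecreasing. Let $\Delta^*=\min\{\Delta(\bar f,\mathbf{V}(\mathcal{A})):(\bar f,\mathcal{A})\text{ compatible}\}$. If the procedure stops at Step 5 of iteration $k$, then $\Delta(\bar f^{k-1},s^2_{k-1})=\Delta^*$.
   Context: Network (DC model): bus set $\mathcal{B}$, $n=|\mathcal{B}|$; line set $\mathcal{E}$, $m=|\mathcal{E}|$; each line $ij$ has susceptance $b_{ij}>0$ and limit $f^{\max}_{ij}>0$. $B$ is the $n\times n$ bus susceptance matrix; $\hat B$ is $B$ with last row and column removed (assumed invertible); $\breve B=\begin{pmatrix}\hat B^{-1}&0\\0&0\end{pmatrix}$ with $i$-th row $\breve B_i$; $\pi_{ij}=\breve B_i^T-\breve B_j^T$. $\mathcal{G}\subseteq\mathcal{B}$ is the set of generator buses, with limits $p_i^{\min}\le p_i^{\max}$ and costs $c_i(p)=c_{i0}p^2+c_{i1}p+c_{i2}$, $c_{i0}\ge 0$. $d\in\mathbb{R}^n$ are loads, $\mu\in\mathbb{R}^n$ mean stochastic injections, $\omega$ a zero-mean random vector with covariance $\Omega$. $\mathcal{K}$ is a given convex set of $n\times n$ participation matrices $\mathcal{A}$ (with rows $\mathcal{A}_i$). Safety parameters $\nu_{ij}\ge0$ (lines) and $\nu_i\ge0$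 (generators) are given. For a matrix $\mathcal{A}$, $\mathbf{V}(\mathcal{A})\in\mathbb{R}^m$ has entries $\mathbf{V}(\mathcal{A})_{ij}=b_{ij}^2\pi_{ij}^T(I-\mathcal{A})\Omega(I-\mathcal{A}^T)\pi_{ij}$ (line flow variances). Compatibility: a pair $(\bar f,\mathcal{A})$ with $\bar f\in\mathbb{R}^m$ is compatible if $\mathcal{A}\in\mathcal{K}$ and there exist $\bar p\in\mathbb{R}^n$ (with $\bar p_i=0$ for $i\notin\mathcal{G}$) and $\bar\theta\in\mathbb{R}^n$ with $B\bar\theta=\bar p+\mu-d$; $\bar f_{ij}=b_{ij}(\bar\theta_i-\bar\theta_j)$ and $|\bar f_{ij}|+\nu_{ij}\sqrt{\mathbf{V}(\mathcal{A})_{ij}}\le f^{\max}_{ij}$ for all $ij\in\mathcal{E}$; and $p_i^{\min}+\nu_i\sqrt{\mathcal{A}_i^T\Omega\mathcal{A}_i}\le\bar p_i\le p_i^{\max}-\nu_i\sqrt{\mathcal{A}_i^T\Omega\mathcal{A}_i}$ for all $i\in\mathcal{G}$ (i.e. they extend to a feasible solution of the safety-constrained DC-OPF, whose objective is $\sum_{i\in\mathcal{G}}[c_{i0}(\bar p_i^2+\mathcal{A}_i^T\Omega\mathcal{A}_i)+c_{i1}\bar p_i+c_{i2}]$). Variance metric (general form): for each line $ij$ a convex nondecreasing function $\Delta_{ij}:[0,\infty)\to[0,\infty)$, and a set $\mathcal{F}(\bar f)\subseteq\mathcal{E}$; $\Delta(\bar f,s^2)=\sum_{ij\in\mathcal{F}(\bar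 f)}\Delta_{ij}(s^2_{ij})$. Subproblems. For $\hat{\mathcal{A}}\in\mathcal{K}$ and $0<\tau<1$, $\mathrm{Reroute}(\hat{\mathcal{A}},\tau)$ is: minimize $\sum_{i\in\mathcal{G}}[c_{i0}(\bar p_i^2+\hat{\mathcal{A}}_i^T\Omega\hat{\mathcal{A}}_i)+c_{i1}\bar p_i+c_{i2}]$ over $\bar p,\bar f,\bar\theta$ subject to $B\bar\theta=\bar p+\mu-d$, $\bar f_{ij}=b_{ij}(\bar\theta_i-\bar\theta_j)$, $|\bar f_{ij}|+\nu_{ij}\sqrt{\mathbf{V}(\hat{\mathcal{A}})_{ij}}\le(1-\tau)f^{\max}_{ij}$ for all $ij\in\mathcal{E}$, and the generator constraints above with $\hat{\mathcal{A}}$. For $\bar f'$, $\mathcal{A}'$, let $\mathbf{T}(\bar f',\mathcal{A}',\tau)=\{ij\in\mathcal{E}:|\bar f'_{ij}|+\nu_{ij}\sqrt{\mathbf{V}(\mathcal{A}')_{ij}}\ge(1-\tau)f^{\max}_{ij}\}$. $\mathrm{VShift}(\bar f',\mathcal{A}',\tau)$ is: minimize $\sum_{ij\in\mathcal{F}(\bar f')}\Delta_{ij}(s_{ij}^2)$ over $s\in\mathbb{R}^m_{\ge0}$, $\mathcal{A}$ subject to $\mathcal{A}\in\mathcal{K}$, $s_{ij}^2\ge\mathbf{V}(\mathcal{A})_{ij}$ for all $ij\in\mathcal{E}$, and $|\bar f'_{ij}|+\nu_{ij}s_{ij}\le f^{\max}_{ij}$ for $ij\in\mathbf{T}(\bar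 f',\mathcal{A}',\tau)$. Variance-shifting Procedure. Input: a feasible solution $(\bar p^0,\bar f^0,\mathcal{A}_0)$ of the safety-constrained problem (so $(\bar f^0,\mathcal{A}_0)$ is compatible), the metric $\Delta$, $0<\tau<1$, and an iteration bound $N\ge1$; set $s^2_0=\mathbf{V}(\mathcal{A}_0)$. For $k=1,\dots,N$: (1) solve $\mathrm{Reroute}(\mathcal{A}_{k-1},\tau)$; if infeasible, stop; else let $(\bar p^k,\bar f^k,\bar\theta^k)$ be an optimal solution. (2) Solve $\mathrm{VShift}(\bar f^k,\mathcal{A}_{k-1},\tau)$, with optimal solution $(\hat s_k,\hat{\mathcal{A}}_k)$. (3) Choose the largest $\lambda\in(0,1]$ such that $(\bar f^k,(1-\lambda)\mathcal{A}_{k-1}+\lambda\hat{\mathcal{A}}_k)$ is compatible. (4) Set $\mathcal{A}_k=(1-\lambda)\mathcal{A}_{k-1}+\lambda\hat{\mathcal{A}}_k$ and $s^2_k=\mathbf{V}(\mathcal{A}_k)$. (5) If $\Delta(\bar f^k,s^2_k)\ge\Delta(\bar f^{k-1},s^2_{k-1})$, stop; otherwise reset $\tau\leftarrow\tau/2$ and continue. *)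

From HB Require Import structures.
From mathcomp Require Import all_boot all_order all_algebra.
From mathcomp Require Export reals.
Set Implicit Arguments. Unset Strict Implicit. Unset Printing Implicit Defensive.
Import Order.TTheory GRing.Theory Num.Theory.
Local Open Scope ring_scope.

(* DC network data: n.+1 buses ('I_n.+1, the last one ord_max is the one
   removed in \hat B), m lines ('I_m); line e goes from bus lfrom e to lto e. *)
Record dcnet (R : realType) (n m : nat) := DCNet {
  lfrom : 'I_m -> 'I_n.+1;
  lto : 'I_m -> 'I_n.+1;
  susc : 'I_m -> R;
  fmax : 'I_m -> R;
  gens : {set 'I_n.+1};
  pmin : 'I_n.+1 -> R;
  pmax : 'I_n.+1 -> R;
  cq : 'I_n.+1 -> R;
  cl : 'I_n.+1 -> R;
  cc : 'I_n.+1 -> R;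
  load : 'cV[R]_n.+1;
  mu : 'cV[R]_n.+1;                (* mean stochastic injections *)
  Omega : 'M[R]_n.+1;              (* covariance of omega *)
  Kset : 'M[R]_n.+1 -> Prop;       (* convex set K of participation matrices *)
  nu_line : 'I_m -> R;
  nu_gen : 'I_n.+1 -> R
}.

Definition convex_mxset (R : realType) (n : nat) (K : 'M[R]_n -> Prop) : Prop :=
  forall (A B : 'M[R]_n) (t : R), K A -> K B -> 0 <= t -> t <= 1 ->
    K ((1 - t) *: A + t *: B).

Section Net.
Variables (R : realType) (n m : nat) (N : dcnet R n m).

Definition incid (e : 'I_m) (i : 'I_n.+1) : R :=
  (lfrom N e == i)%:R - (lto N e == i)%:R.

Definition Bmat : 'M[R]_n.+1 :=
  \matrix_(i, j) \sum_(e < m) susc N e * incid e i * incid e j.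

Definition hatB : 'M[R]_n :=
  \matrix_(i, j) Bmat (widen_ord (leqnSn n) i) (widen_ord (leqnSn n) j).

Definition breveB : 'M[R]_n.+1 :=
  \matrix_(i, j) match unlift ord_max i, unlift ord_max j with
                 | Some i', Some j' => invmx hatB i' j'
                 | _, _ => 0 end.

Definition piv (e : 'I_m) : 'cV[R]_n.+1 :=
  (row (lfrom N e) breveB - row (lto N e) breveB)^T.

Definition Vvar (A : 'M[R]_n.+1) (e : 'I_m) : R :=
  susc N e ^+ 2 * ((piv e)^T *m (1 - A) *m Omega N *m (1 - A^T) *m piv e) 0 0.

Definition gvar (A : 'M[R]_n.+1) (i : 'I_n.+1) : R :=
  (row i A *m Omega N *m (row i A)^T) 0 0.

Definition dc_flow (p : 'cV[R]_n.+1) (f : 'I_m -> R) (theta : 'cV[R]_n.+1) : Prop :=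
  Bmat *m theta = p + mu N - load N /\
  forall e, f e = susc N e * (theta (lfrom N e) 0 - theta (lto N e) 0).

Definition gen_only (p : 'cV[R]_n.+1) : Prop :=
  forall i, i \notin gens N -> p i 0 = 0.

Definition gen_ok (A : 'M[R]_n.+1) (p : 'cV[R]_n.+1) : Prop :=
  forall i, i \in gens N ->
    pmin N i + nu_gen N i * Num.sqrt (gvar A i) <= p i 0 /\
    p i 0 <= pmax N i - nu_gen N i * Num.sqrt (gvar A i).

Definition line_ok (A : 'M[R]_n.+1) (f : 'I_m -> R) (scale : R) : Prop :=
  forall e, `|f e| + nu_line N e * Num.sqrt (Vvar A e) <= scale * fmax N e.

Definition sc_feasible (p : 'cV[R]_n.+1) (f : 'I_m -> R) (A : 'M[R]_n.+1) : Prop :=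
  Kset N A /\ gen_only p /\ (exists theta, dc_flow p f theta) /\
  line_ok A f 1 /\ gen_ok A p.

Definition compatible (f : 'I_m -> R) (A : 'M[R]_n.+1) : Prop :=
  exists p, sc_feasible p f A.

Definition cost (A : 'M[R]_n.+1) (p : 'cV[R]_n.+1) : R :=
  \sum_(i in gens N) (cq N i * (p i 0 ^+ 2 + gvar A i) + cl N i * p i 0 + cc N i).

Definition reroute_feasible (A : 'M[R]_n.+1) (tau : R)
  (p : 'cV[R]_n.+1) (f : 'I_m -> R) (theta : 'cV[R]_n.+1) : Prop :=
  gen_only p /\ dc_flow p f theta /\ line_ok A f (1 - tau) /\ gen_ok A p.

Definition reroute_opt (A : 'M[R]_n.+1) (tau : R)
  (p : 'cV[R]_n.+1) (f : 'I_m -> R) (theta : 'cV[R]_n.+1) : Prop :=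
  reroute_feasible A tau p f theta /\
  forall p' f' theta', reroute_feasible A tau p' f' theta' -> cost A p <= cost A p'.

Definition tight (f' : 'I_m -> R) (A' : 'M[R]_n.+1) (tau : R) (e : 'I_m) : bool :=
  (1 - tau) * fmax N e <= `|f' e| + nu_line N e * Num.sqrt (Vvar A' e).

Definition metric (F : ('I_m -> R) -> {set 'I_m}) (Delta : 'I_m -> R -> R)
  (f : 'I_m -> R) (s2 : 'I_m -> R) : R :=
  \sum_(e in F f) Delta e (s2 e).

Definition vshift_feasible (f' : 'I_m -> R) (A' : 'M[R]_n.+1) (tau : R)
  (s : 'I_m -> R) (A : 'M[R]_n.+1) : Prop :=
  (forall e, 0 <= s e) /\ Kset N A /\ (forall e, Vvar A e <= s e ^+ 2) /\
  (forall e, tight f' A' tau e -> `|f' e| + nu_line N e * s e <= fmax N e).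

Definition vshift_opt (F : ('I_m -> R) -> {set 'I_m}) (Delta : 'I_m -> R -> R)
  (f' : 'I_m -> R) (A' : 'M[R]_n.+1) (tau : R) (s : 'I_m -> R) (A : 'M[R]_n.+1) : Prop :=
  vshift_feasible f' A' tau s A /\
  forall s2 A2, vshift_feasible f' A' tau s2 A2 ->
    metric F Delta f' (fun e => s e ^+ 2) <= metric F Delta f' (fun e => s2 e ^+ 2).

End Net.

Record net_hyp (R : realType) (n m : nat) (N : dcnet R n m) : Prop := {
  lines_nonloop : forall e, lfrom N e != lto N e;
  susc_pos : forall e, 0 < susc N e;
  fmax_pos : forall e, 0 < fmax N e;
  pmin_le_pmax : forall i, i \in gens N -> pmin N i <= pmax N i;
  cq_ge0 : forall i, i \in gens N -> 0 <= cq N i;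
  Omega_sym : (Omega N)^T = Omega N;
  Omega_psd : forall v : 'cV[R]_n.+1, 0 <= (v^T *m Omega N *m v) 0 0;
  hatB_inv : hatB N \in unitmx;
  K_convex : convex_mxset (Kset N);
  nu_line_ge0 : forall e, 0 <= nu_line N e;
  nu_gen_ge0 : forall i, 0 <= nu_gen N i
}.

Definition metric_fun_hyp (R : realType) (Dl : R -> R) : Prop :=
  (forall x, 0 <= x -> 0 <= Dl x) /\
  (forall x y, 0 <= x -> x <= y -> Dl x <= Dl y) /\
  (forall x y t, 0 <= x -> 0 <= y -> 0 <= t -> t <= 1 ->
     Dl ((1 - t) * x + t * y) <= (1 - t) * Dl x + t * Dl y).

Definition F_I (R : realType) (m : nat) : ('I_m -> R) -> {set 'I_m} :=
  fun _ => [set: 'I_m].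

Definition mixA (R : realType) (n : nat) (A B : 'M[R]_n) (l : R) : 'M[R]_n :=
  (1 - l) *: A + l *: B.

Definition tau_at (R : realType) (tau0 : R) (j : nat) : R := tau0 / 2 ^+ j.-1.

Definition is_min_value (R : realType) (P : R -> Prop) (x : R) : Prop :=
  P x /\ forall y, P y -> x <= y.

(** Suppose the procedure stops at Step 5 of iteration k although some
    compatible pair (f, A) has Delta(V(A)) < Delta(V(A_{k-1})); in model (I)
    the metric only depends on the variances.  With tau = tau_k and t = tau^2,
    the matrix A_t = (1 - t) A_{k-1} + t A gives a feasible point of
    VShift(f^k, A_{k-1}, tau): V is convex in the participation matrix, so
    nu sqrt(V(A_t)) <= sqrt((1 - t) ((1 - tau) f^max - |f^k|)^2 + t (f^max)^2),
    which is at most f^max - |f^k|; the rerouting margin tau f^max absorbs the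
    move towards A.  By optimality and convexity of the metric,
    Delta(V(Ahat_k)) <= Delta(V(A_t)) < Delta(V(A_{k-1})), and then
    Delta(V(A_k)) < Delta(V(A_{k-1})) for the convex combination A_k, which
    contradicts the stopping test. *)
From HB Require Import structures.
From mathcomp Require Import all_boot all_order all_algebra.
From mathcomp Require Import reals.
From mathcomp Require Import ring lra.
Set Implicit Arguments.
Unset Strict Implicit.
Unset Printing Implicit Defensive.

Import Order.TTheory GRing.Theory Num.Theory.
Local Open Scope ring_scope.

Section BilinearForm.
Variables (R : realDomainType) (k : nat) (Om : 'M[R]_k).

Definition mxbform (x y : 'cV[R]_k) : R := (x^T *m Om *m y) 0 0.

Lemma mxbformDl a b x y z :
  mxbform (a *: x + b *: y) z = a * mxbform x z + b * mxbform y z.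
Proof. by rewrite /mxbform linearD !linearZ /= !mulmxDl -!scalemxAl !mxE. Qed.

Lemma mxbformDr a b x y z :
  mxbform z (a *: x + b *: y) = a * mxbform z x + b * mxbform z y.
Proof. by rewrite /mxbform !mulmxDr -!scalemxAr !mxE. Qed.

Lemma mxbform_mix t x y :
  mxbform ((1 - t) *: x + t *: y) ((1 - t) *: x + t *: y) =
  (1 - t) * mxbform x x + t * mxbform y y - t * (1 - t) * mxbform (x - y) (x - y).
Proof.
have -> : x - y = 1 *: x + (-1) *: y by rewrite scale1r scaleN1r.
by rewrite !mxbformDl !mxbformDr; ring.
Qed.

Hypothesis Om_psd : forall v, 0 <= mxbform v v.

Lemma mxbform_convex t x y : 0 <= t <= 1 ->
  mxbform ((1 - t) *: x + t *: y) ((1 - t) *: x + t *: y) <=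
  (1 - t) * mxbform x x + t * mxbform y y.
Proof.
move=> /andP[t_ge0 t_le1]; rewrite mxbform_mix lerBlDr lerDl.
by rewrite !mulr_ge0 ?subr_ge0.
Qed.

End BilinearForm.

Lemma margin_mix_le (R : realDomainType) (tau a F u0 u1 u : R) :
  0 <= tau <= 1 -> 0 <= u0 <= a -> 0 <= u1 <= F -> 0 <= u ->
  u ^+ 2 <= (1 - tau ^+ 2) * u0 ^+ 2 + tau ^+ 2 * u1 ^+ 2 ->
  u <= a + tau * F.
Proof.
move=> /andP[tau_ge0 tau_le1] /andP[u0_ge0 u0_le] /andP[u1_ge0 u1_le] u_ge0 hu.
have a_ge0 : 0 <= a by apply: le_trans u0_le.
have tauF_ge0 : 0 <= tau * F by rewrite mulr_ge0 // (le_trans u1_ge0).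
rewrite -(ler_sqr (x := u)) ?nnegrE ?addr_ge0 //.
apply: (le_trans hu).
have u0_sq : u0 ^+ 2 <= a ^+ 2 by rewrite ler_sqr ?nnegrE.
have u1_sq : u1 ^+ 2 <= F ^+ 2 by rewrite ler_sqr ?nnegrE // (le_trans u1_ge0).
have w_ge0 : 0 <= 1 - tau ^+ 2 by rewrite subr_ge0 expr_le1.
have cross_ge0 : 0 <= (tau * a) ^+ 2 + 2 * (a * (tau * F)).
  exact: addr_ge0 (sqr_ge0 _) (mulr_ge0 (ler0n _ 2) (mulr_ge0 a_ge0 tauF_ge0)).
have -> : (a + tau * F) ^+ 2 =
  (1 - tau ^+ 2) * a ^+ 2 + tau ^+ 2 * F ^+ 2 + ((tau * a) ^+ 2 + 2 * (a * (tau * F))).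
  by ring.
rewrite -[X in X <= _]addr0 lerD // lerD // ler_wpM2l ?sqr_ge0 //.
Qed.

Lemma tau_at_gt0 (R : realType) (tau0 : R) j : 0 < tau0 -> 0 < tau_at tau0 j.
Proof. by move=> tau0_gt0; rewrite divr_gt0 // exprn_gt0. Qed.

Lemma tau_at_le1 (R : realType) (tau0 : R) j :
  0 < tau0 -> tau0 <= 1 -> tau_at tau0 j <= 1.
Proof.
move=> tau0_gt0 tau0_le1; rewrite ler_pdivrMr ?exprn_gt0 // mul1r.
by apply: le_trans tau0_le1 _; rewrite exprn_ege1 // ler1n.
Qed.

Section Network.
Variables (R : realType) (n m : nat) (N : dcnet R n m).
Hypothesis H : net_hyp N.

Lemma Vvar_mxbform A e :
  Vvar N A e = susc N e ^+ 2 *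
    mxbform (Omega N) ((1 - A^T) *m piv N e) ((1 - A^T) *m piv N e).
Proof.
rewrite /Vvar /mxbform trmx_mul !mulmxA.
congr (_ * (_ *m _ *m _ *m _ *m _) 0 0).
by apply/matrixP => i j; rewrite !mxE eq_sym.
Qed.

Lemma Vvar_ge0 A e : 0 <= Vvar N A e.
Proof. by rewrite Vvar_mxbform mulr_ge0 ?sqr_ge0 // (Omega_psd H). Qed.

Lemma Vvar_mixA_le A0 A1 (t : R) e : 0 <= t <= 1 ->
  Vvar N (mixA A0 A1 t) e <= (1 - t) * Vvar N A0 e + t * Vvar N A1 e.
Proof.
move=> t01; rewrite !Vvar_mxbform.
have -> : (1 - (mixA A0 A1 t)^T) *m piv N e =
    (1 - t) *: ((1 - A0^T) *m piv N e) + t *: ((1 - A1^T) *m piv N e).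
  rewrite !scalemxAl -mulmxDl; congr (_ *m _).
  by apply/matrixP => i j; rewrite !mxE; ring.
rewrite mulrCA [t * _]mulrCA -mulrDr ler_wpM2l ?sqr_ge0 //.
exact: mxbform_convex (Omega_psd H) _ _ _ t01.
Qed.

Lemma vshift_feasible_mixA f' f A0 A (tau : R) :
  0 <= tau <= 1 -> Kset N A0 -> Kset N A ->
  line_ok N A0 f' (1 - tau) -> line_ok N A f 1 ->
  vshift_feasible N f' A0 tau
    (fun e => Num.sqrt (Vvar N (mixA A0 A (tau ^+ 2)) e)) (mixA A0 A (tau ^+ 2)).
Proof.
move=> tau01 KA0 KA line0 line1.
have /andP[tau_ge0 tau_le1] := tau01.
have t01 : 0 <= tau ^+ 2 <= 1 by rewrite sqr_ge0 expr_le1.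
have /andP[t_ge0 t_le1] := t01.
split; first by move=> e; exact: sqrtr_ge0.
split; first exact: (K_convex H).
split; first by move=> e; rewrite sqr_sqrtr // Vvar_ge0.
move=> e _; set u := nu_line N e * _.
suff : u <= ((1 - tau) * fmax N e - `|f' e|) + tau * fmax N e by lra.
have nu_ge0 := nu_line_ge0 H e.
apply: (margin_mix_le (u0 := nu_line N e * Num.sqrt (Vvar N A0 e))
                      (u1 := nu_line N e * Num.sqrt (Vvar N A e))) => //.
- by rewrite mulr_ge0 ?sqrtr_ge0 //= lerBrDl line0.
- rewrite mulr_ge0 ?sqrtr_ge0 //=.
  by have := line1 e; have := normr_ge0 (f e); lra.
- by rewrite mulr_ge0 ?sqrtr_ge0.
rewrite !exprMn !sqr_sqrtr ?Vvar_ge0 //.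
rewrite [(1 - _) * _]mulrCA [_ * (_ * Vvar N A e)]mulrCA -mulrDr.
by rewrite ler_wpM2l ?sqr_ge0 // Vvar_mixA_le.
Qed.

Variable Delta : 'I_m -> R -> R.
Hypothesis HD : forall e, metric_fun_hyp (Delta e).

Definition var_metric (A : 'M[R]_n.+1) : R := \sum_(e < m) Delta e (Vvar N A e).

Lemma metric_F_I f s : metric (@F_I R m) Delta f s = \sum_(e < m) Delta e (s e).
Proof. by rewrite /metric /F_I; apply: eq_bigl => e; rewrite in_setT. Qed.

Lemma metric_F_I_Vvar f A : metric (@F_I R m) Delta f (Vvar N A) = var_metric A.
Proof. exact: metric_F_I. Qed.

Lemma var_metric_mixA_le A0 A1 (t : R) : 0 <= t <= 1 ->
  var_metric (mixA A0 A1 t) <= (1 - t) * var_metric A0 + t * var_metric A1.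
Proof.
move=> /andP[t_ge0 t_le1]; rewrite /var_metric !mulr_sumr -big_split /=.
apply: ler_sum => e _; have [_ [Dmono Dconv]] := HD e.
apply: le_trans (Dconv _ _ _ (Vvar_ge0 A0 e) (Vvar_ge0 A1 e) t_ge0 t_le1).
by apply: Dmono; [exact: Vvar_ge0 | apply: Vvar_mixA_le; rewrite t_ge0].
Qed.

Lemma var_metric_mixA_lt A0 A (t : R) : 0 < t <= 1 ->
  var_metric A < var_metric A0 -> var_metric (mixA A0 A t) < var_metric A0.
Proof.
move=> /andP[t_gt0 t_le1] lt_A.
apply: le_lt_trans (var_metric_mixA_le A0 A _) _; first by rewrite ltW.
have : t * var_metric A < t * var_metric A0 by rewrite ltr_pM2l.
lra.
Qed.

Lemma vshift_opt_var_metric_lt f' A0 (tau : R) s Ah f A :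
  0 < tau <= 1 -> Kset N A0 -> line_ok N A0 f' (1 - tau) ->
  vshift_opt N (@F_I R m) Delta f' A0 tau s Ah ->
  compatible N f A -> var_metric A < var_metric A0 ->
  var_metric Ah < var_metric A0.
Proof.
move=> /andP[tau_gt0 tau_le1] KA0 line0 [[_ [_ [Vs _]]] opt] [p [KA [_ [_ [line1 _]]]]] lt_A.
have tau01 : 0 <= tau <= 1 by rewrite ltW.
have := opt _ _ (vshift_feasible_mixA tau01 KA0 KA line0 line1).
rewrite !metric_F_I => le_opt.
have t01 : 0 < tau ^+ 2 <= 1 by rewrite exprn_gt0 // expr_le1 // ltW.
apply: le_lt_trans (var_metric_mixA_lt t01 lt_A).
have sqrt_sq : \sum_(e < m) Delta e (Num.sqrt (Vvar N (mixA A0 A (tau ^+ 2)) e) ^+ 2) =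
    var_metric (mixA A0 A (tau ^+ 2)).
  by apply: eq_bigr => e _; rewrite sqr_sqrtr ?Vvar_ge0.
rewrite sqrt_sq in le_opt; apply: le_trans le_opt.
apply: ler_sum => e _; have [_ [Dmono _]] := HD e.
exact: Dmono (Vvar_ge0 _ _) (Vs e).
Qed.

End Network.

Theorem theorem1 (R : realType) (n m : nat) (N : dcnet R n m)
  (Delta : 'I_m -> R -> R) (tau0 : R) (Nit k : nat)
  (pbar : nat -> 'cV[R]_n.+1) (fbar : nat -> 'I_m -> R)
  (theta : nat -> 'cV[R]_n.+1) (shat : nat -> 'I_m -> R)
  (Ahat : nat -> 'M[R]_n.+1) (lam : nat -> R) (Aseq : nat -> 'M[R]_n.+1) :
  net_hyp N ->
  (forall e, metric_fun_hyp (Delta e)) ->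
  0 < tau0 -> tau0 < 1 ->
  (1 <= k)%N -> (k <= Nit)%N ->
  (* input: a feasible solution of the safety-constrained problem *)
  sc_feasible N (pbar 0%N) (fbar 0%N) (Aseq 0%N) ->
  (* iterations j = 1..k executed Steps 1-4 *)
  (forall j, (1 <= j)%N -> (j <= k)%N ->
     reroute_opt N (Aseq j.-1) (tau_at tau0 j) (pbar j) (fbar j) (theta j) /\
     vshift_opt N (@F_I R m) Delta (fbar j) (Aseq j.-1) (tau_at tau0 j)
       (shat j) (Ahat j) /\
     (0 < lam j /\ lam j <= 1) /\
     compatible N (fbar j) (mixA (Aseq j.-1) (Ahat j) (lam j)) /\
     (forall l, lam j < l -> l <= 1 ->
        ~ compatible N (fbar j) (mixA (Aseq j.-1) (Ahat j) l)) /\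
     Aseq j = mixA (Aseq j.-1) (Ahat j) (lam j)) ->
  (* iterations j = 1..k-1 did not stop at Step 5 *)
  (forall j, (1 <= j)%N -> (j < k)%N ->
     metric (@F_I R m) Delta (fbar j) (Vvar N (Aseq j)) <
     metric (@F_I R m) Delta (fbar j.-1) (Vvar N (Aseq j.-1))) ->
  (* the procedure stops at Step 5 of iteration k *)
  metric (@F_I R m) Delta (fbar k.-1) (Vvar N (Aseq k.-1)) <=
  metric (@F_I R m) Delta (fbar k) (Vvar N (Aseq k)) ->
  is_min_value
    (fun y => exists f A, compatible N f A /\ y = metric (@F_I R m) Delta f (Vvar N A))
    (metric (@F_I R m) Delta (fbar k.-1) (Vvar N (Aseq k.-1))).
Proof.
move=> H HD tau0_gt0 tau0_lt1 k_ge1 _ feas0 iter _ stop.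
have [[[_ [_ [line_k _]]] _] [vshift_k [[lam_gt0 lam_le1] [_ [_ Ak]]]]] :=
  iter k k_ge1 (leqnn k).
have compat_prev : compatible N (fbar k.-1) (Aseq k.-1).
  case Ek: k.-1 => [|j]; first by exists (pbar 0%N).
  have j_lt_k : (j.+1 <= k)%N by rewrite -Ek leq_pred.
  have [_ [_ [_ [compat_j [_ ->]]]]] := iter j.+1 isT j_lt_k.
  exact: compat_j.
have [p [K_prev _]] := compat_prev.
split; first by exists (fbar k.-1), (Aseq k.-1).
move=> _ [f [A [compat_A ->]]]; rewrite !(metric_F_I_Vvar N) in stop *.
rewrite leNgt; apply/negP => lt_A.
have tau_k : 0 < tau_at tau0 k <= 1 by rewrite tau_at_gt0 // tau_at_le1 // ltW.
have lt_hat := vshift_opt_var_metric_lt H HD tau_k K_prev line_k vshift_k compat_A lt_A.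
have lam_k : 0 < lam k <= 1 by rewrite lam_gt0.
by have := var_metric_mixA_lt H HD lam_k lt_hat; rewrite -Ak ltNge stop.
Qed.
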